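(* Let $A$ be a fixed $s \times t$ matrix and let $A'$ be the $s' \times t$ matrix obtained from $A$ by deleting rows that are equal to their predecessors in $A$. There exist polynomials $p_1,p_2$ (depending only on $A$) such that for every $\epsilon > 0$, with $n_1 = p_1(\epsilon^{-1})$ and $\tau = 1/p_2(\epsilon^{-1})$, for every $n \geq n_1$, every $n \times n$ matrix $M$ that contains $\epsilon n^{s'+t}$ copies of $A'$ also contains $\tau n^{s+t}$ copies of $A$.
   Context: Matrices are over a fixed finite alphabet, with ordered rows and columns. A submatrix is obtained by deleting rows and columns while preserving order; a copy of a matrix $B$ in $M$ is a submatrix of $M$ equal to $B$. The predecessor of a row in $A$ is the row immediately preceding it in $A$. *)

From HB Require Import structures.
From mathcomp Require Import all_boot all_order all_algebra.
From mathcomp Require Import reals.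
Set Implicit Arguments. Unset Strict Implicit. Unset Printing Implicit Defensive.
Import Order.TTheory GRing.Theory Num.Theory.

Definition incr_map (m n : nat) (f : {ffun 'I_m -> 'I_n}) : bool :=
  [forall i : 'I_m, forall i' : 'I_m, (i < i')%N ==> (f i < f i')%N].

Definition copies (T : finType) (s t n : nat) (B : 'M[T]_(s, t)) (M : 'M[T]_n) : nat :=
  #|[set rc : {ffun 'I_s -> 'I_n} * {ffun 'I_t -> 'I_n} |
      [&& incr_map rc.1, incr_map rc.2 &
          [forall i, forall j, M (rc.1 i) (rc.2 j) == B i j]]]|.

Definition keep_row (T : finType) (s t : nat) (A : 'M[T]_(s, t)) (i : 'I_s) : bool :=
  (val i == 0%N) ||
  [exists k : 'I_s, ((val k).+1 == val i) && (row k A != row i A)].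

Definition kept_rows (T : finType) (s t : nat) (A : 'M[T]_(s, t)) : seq 'I_s :=
  [seq i <- enum 'I_s | keep_row A i].

Definition dedup_size (T : finType) (s t : nat) (A : 'M[T]_(s, t)) : nat :=
  size (kept_rows A).

Definition dedup (T : finType) (s t : nat) (A : 'M[T]_(s, t)) : 'M[T]_(dedup_size A, t) :=
  \matrix_(i < dedup_size A, j < t) A (tnth (in_tuple (kept_rows A)) i) j.

From HB Require Import structures.
From mathcomp Require Import all_boot all_order all_algebra.
From mathcomp Require Import reals.
From mathcomp Require Import ring lra zify.
Set Implicit Arguments. Unset Strict Implicit. Unset Printing Implicit Defensive.
Import Order.TTheory GRing.Theory Num.Theory.

(* Suppose rows i and i+1 of A coincide and let A1 be A with row i+1 deleted.
   Sort the copies of A1 in M into classes according to their columns and all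
   their rows except the one carrying row i.  Two copies of the same class whose
   row i sits at positions r < r' glue into a copy of A (rows r and r' carry
   rows i and i+1).  With N = n^(s+t) bounding the number of classes,
   Cauchy-Schwarz gives at least (#A1 copies)^2 / N such pairs, so
   eps n^(s+1+t) copies of A1 force eps^2/4 n^(s+2+t) copies of A as soon as
   n >= 2/eps.  The matrix A arises from A' by repeating rows along a monotone
   surjection of the row indices; deleting the repetitions one at a time and
   composing the polynomial losses gives the theorem. *)

Lemma sqr_sum_le_card_sum_sqr (I : finType) (a : I -> nat) :
  (\sum_i a i) ^ 2 <= #|I| * \sum_i a i ^ 2.
Proof.
rewrite -(leq_pmul2l (isT : 0 < 2)).
have -> : (\sum_i a i) ^ 2 = \sum_i \sum_j a i * a j by rewrite (expnS _ 1) expn1 big_distrlr.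
have -> : 2 * (#|I| * \sum_i a i ^ 2) = \sum_i \sum_j (a i ^ 2 + a j ^ 2).
  rewrite mul2n -addnn {1}big_distrr /=.
  under [RHS]eq_bigr do rewrite big_split /= sum_nat_const.
  by rewrite big_split /= sum_nat_const; congr (_ + _); apply: eq_bigr => i _; rewrite mulnC.
rewrite big_distrr; apply: leq_sum => i _; rewrite big_distrr; apply: leq_sum => j _.
exact: nat_Cauchy.
Qed.

Definition copies_set (T : finType) (s t n : nat) (B : 'M[T]_(s, t)) (M : 'M[T]_n) :=
  [set rc : {ffun 'I_s -> 'I_n} * {ffun 'I_t -> 'I_n} |
      [&& incr_map rc.1, incr_map rc.2 &
          [forall i, forall j, M (rc.1 i) (rc.2 j) == B i j]]].

Lemma copiesE (T : finType) (s t n : nat) (B : 'M[T]_(s, t)) (M : 'M[T]_n) :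
  copies B M = #|copies_set B M|.
Proof. by []. Qed.

Lemma incr_mapP m n (f : {ffun 'I_m -> 'I_n}) :
  reflect {homo f : a b / a < b} (incr_map f).
Proof.
apply: (iffP forallP) => [f_incr a b | f_incr a].
  by move/forallP: (f_incr a) => /(_ b) /implyP.
by apply/forallP => b; apply/implyP; apply: f_incr.
Qed.

Lemma copies_setP (T : finType) (s t n : nat) (B : 'M[T]_(s, t)) (M : 'M[T]_n)
    (rc : {ffun 'I_s -> 'I_n} * {ffun 'I_t -> 'I_n}) :
  reflect [/\ {homo rc.1 : a b / a < b}, {homo rc.2 : a b / a < b} &
              forall i j, M (rc.1 i) (rc.2 j) = B i j]
          (rc \in copies_set B M).
Proof.
rewrite inE; apply: (iffP and3P) => [[/incr_mapP r_incr /incr_mapP c_incr /forallP eqB]|].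
  by split=> // i j; move/forallP: (eqB i) => /(_ j) /eqP.
move=> [/incr_mapP r_incr /incr_mapP c_incr eqB]; split=> //.
by apply/forallP => i; apply/forallP => j; apply/eqP.
Qed.

Lemma leq_copies_rowsub (T : finType) (s0 s t n : nat) (B : 'M[T]_(s0, t))
    (phi : 'I_s -> 'I_s0) (M : 'M[T]_n) :
  {homo phi : k k' / k < k'} -> (forall y, exists k, phi k = y) ->
  copies B M <= copies (rowsub phi B) M.
Proof.
move=> phi_incr phi_surj; rewrite !copiesE.
pose f (rc : {ffun 'I_s0 -> 'I_n} * {ffun 'I_t -> 'I_n}) :
  {ffun 'I_s -> 'I_n} * {ffun 'I_t -> 'I_n} := ([ffun k => rc.1 (phi k)], rc.2).
have f_inj : injective f.
  move=> [r c] [r' c'] eq_f; have /= eq_c := congr1 snd eq_f; congr pair => //.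
  apply/ffunP => y; have [k <-] := phi_surj y.
  by have := congr1 (fun rc : {ffun 'I_s -> 'I_n} * _ => rc.1 k) eq_f; rewrite /= !ffunE.
rewrite -(card_imset _ f_inj); apply: subset_leq_card.
apply/subsetP => _ /imsetP [rc /copies_setP [r_incr c_incr eqB] ->].
apply/copies_setP; split=> //= [k k' lt_kk'|k j]; rewrite !ffunE.
  exact/r_incr/phi_incr.
by rewrite eqB mxE.
Qed.

Lemma lift_lift0_widen n (i : 'I_n.+1) : lift (lift ord0 i) i = widen_ord (leqnSn _) i.
Proof. by apply: val_inj; rewrite /= /bump /= ltnn. Qed.

Section DuplicateRow.
Variables (T : finType) (n s t : nat) (A : 'M[T]_(s.+2, t)) (i : 'I_s.+1) (M : 'M[T]_n).
Hypothesis eq_rows : forall j, A (widen_ord (leqnSn _) i) j = A (lift ord0 i) j.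

Local Notation i' := (lift ord0 i).
Local Notation A1 := (row' i' A).
Local Notation copy1 := ({ffun 'I_s.+1 -> 'I_n} * {ffun 'I_t -> 'I_n})%type.
Local Notation copy := ({ffun 'I_s.+2 -> 'I_n} * {ffun 'I_t -> 'I_n})%type.
Local Notation key_type := ({ffun 'I_s -> 'I_n} * {ffun 'I_t -> 'I_n})%type.

Let key (x : copy1) : key_type :=
  ([ffun m => x.1 (lift i m)], x.2).

Let fibre k := [set x in copies_set A1 M | key x == k].
Let pairs := [set p : copy1 * copy1 |
  [&& p.1 \in copies_set A1 M, p.2 \in copies_set A1 M & key p.1 == key p.2]].
Let ordered_pairs := [set p in pairs | p.1.1 i < p.2.1 i].

Let glue (p : copy1 * copy1) : copy :=
  ([ffun k => if unlift i' k is Some k' then p.1.1 k' else p.2.1 i], p.1.2).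

Lemma eq_key (x y : copy1) :
  key x = key y -> (forall b, b != i -> x.1 b = y.1 b) /\ x.2 = y.2.
Proof.
move=> eq_xy; split=> [b|]; last by have := congr1 snd eq_xy.
case: (unliftP i b) => [m ->|->]; last by rewrite eqxx.
by have := congr1 (fun z : key_type => z.1 m) eq_xy; rewrite /= !ffunE.
Qed.

Lemma glue_inj : {in ordered_pairs &, injective glue}.
Proof.
move=> [x y] [x' y']; rewrite !inE /= => /andP [/and3P [_ _ /eqP /eq_key [eq_x_y eq_c]] _].
move=> /andP [/and3P [_ _ /eqP /eq_key [eq_x'_y' eq_c']] _] eq_glue.
have eq_x : x.1 = x'.1.
  apply/ffunP => m; have := congr1 (fun z : copy => z.1 (lift i' m)) eq_glue.
  by rewrite /= !ffunE liftK.
have eq_yi : y.1 i = y'.1 i.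
  by have := congr1 (fun z : copy => z.1 i') eq_glue; rewrite /= !ffunE unlift_none.
have eq_x2 : x.2 = x'.2 by have := congr1 snd eq_glue.
have eq_y : y.1 = y'.1.
  apply/ffunP => b; have [->|nbi] := eqVneq b i; first exact: eq_yi.
  by rewrite -eq_x_y // -eq_x'_y' // eq_x.
move: x y x' y' eq_x eq_x2 eq_y eq_c eq_c' {eq_glue eq_x_y eq_x'_y' eq_yi}.
by move=> [? ?] [? ?] [? ?] [? ?] /= -> -> -> <- <-.
Qed.

Lemma glue_copy : {in ordered_pairs, forall p, glue p \in copies_set A M}.
Proof.
move=> [x y]; rewrite inE => /andP [+ /= lt_xy]; rewrite inE /=.
move=> /and3P [/copies_setP [x_incr x_c x_eq] /copies_setP [y_incr _ y_eq]].
move=> /eqP /eq_key [eq_x_y eq_c].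
apply/copies_setP; split=> //= [a b|k j]; last first.
  rewrite ffunE; case: (unliftP i' k) => [a|] ->; first by rewrite x_eq mxE.
  by rewrite eq_c y_eq mxE lift_lift0_widen eq_rows.
rewrite !ffunE; case: (unliftP i' a) => [a'|] ->; case: (unliftP i' b) => [b'|] -> //=.
- by rewrite ltnNge leq_bump2 -ltnNge => /x_incr.
- rewrite /bump leq0n add1n => lt_a'; apply: leq_ltn_trans lt_xy.
  have [->|ne] := eqVneq a' i; first by [].
  apply/ltnW/x_incr; move: ne lt_a'; rewrite -val_eqE.
  by case: (leqP i.+1 a') => /=; lia.
- rewrite /bump leq0n add1n => lt_b'.
  have ne : b' != i by move: lt_b'; rewrite -val_eqE; case: (leqP i.+1 b') => /=; lia.
  rewrite eq_x_y //; apply: y_incr; move: ne lt_b'; rewrite -val_eqE.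
  by case: (leqP i.+1 b') => /=; lia.
- by rewrite ltnn.
Qed.

Lemma card_ordered_pairs_le : #|ordered_pairs| <= copies A M.
Proof.
rewrite -(card_in_imset glue_inj) copiesE; apply: subset_leq_card.
by apply/subsetP => _ /imsetP [p p_ord ->]; exact: glue_copy.
Qed.

Lemma card_pairs_le : #|pairs| <= 2 * #|ordered_pairs| + copies A1 M.
Proof.
pose swap (p : copy1 * copy1) := (p.2, p.1).
pose diag (x : copy1) := (x, x).
have pairs_sub :
    pairs \subset (ordered_pairs :|: swap @: ordered_pairs) :|: diag @: copies_set A1 M.
  apply/subsetP => -[x y] p_pairs; move: (p_pairs); rewrite inE /= => /and3P [x_copy _].
  move=> /eqP /eq_key [eq_x_y eq_c]; rewrite !in_setU.
  case: (ltngtP (x.1 i) (y.1 i)) => [lt_xy|lt_yx|eq_xy].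
  - by rewrite inE p_pairs lt_xy.
  - apply/orP; left; apply/orP; right; apply/imsetP; exists (y, x) => //.
    by move: p_pairs; rewrite !inE /= eq_sym [key y == _]eq_sym lt_yx andbT => /and3P [-> -> ->].
  - apply/orP; right; apply/imsetP; exists x => //; rewrite /diag.
    have eq_y1 : y.1 = x.1.
      apply/ffunP => b; have [->|nbi] := eqVneq b i; first exact: (esym (val_inj eq_xy)).
      exact: (esym (eq_x_y _ nbi)).
    by move: x y eq_c eq_y1 {p_pairs x_copy eq_x_y eq_xy} => [? ?] [? ?] /= -> ->.
apply: leq_trans (subset_leq_card pairs_sub) _; rewrite copiesE mul2n -addnn.
apply: leq_trans (leq_card_setU _ _) _; apply: leq_add; last exact: leq_imset_card.
by apply: leq_trans (leq_card_setU _ _) _; rewrite leq_add2l leq_imset_card.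
Qed.

Lemma copies_sum_fibres : copies A1 M = \sum_k #|fibre k|.
Proof.
rewrite copiesE -sum1_card (partition_big key predT) //=; apply: eq_bigr => k _.
by rewrite -sum1_card; apply: eq_bigl => x; rewrite [in RHS]inE.
Qed.

Lemma card_pairs_sum_fibres : #|pairs| = \sum_k #|fibre k| ^ 2.
Proof.
rewrite -sum1_card (partition_big (fun p : copy1 * copy1 => key p.1) predT) //=.
apply: eq_bigr => k _; rewrite expnS expn1 -cardsX -sum1_card; apply: eq_bigl => p.
rewrite !inE; have [<-|_] := eqVneq (key p.1) k; last by rewrite !andbF.
by rewrite (eq_sym (key p.2)) !andbT.
Qed.

Lemma copies_dup_row_sqr :
  copies A1 M ^ 2 <= n ^ (s + t) * (2 * copies A M + copies A1 M).
Proof.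
have := sqr_sum_le_card_sum_sqr (fun k => #|fibre k|).
rewrite -copies_sum_fibres -card_pairs_sum_fibres card_prod !card_ffun !card_ord -expnD.
move/leq_trans; apply; rewrite leq_mul2l; apply/orP; right.
by apply: leq_trans card_pairs_le _; rewrite leq_add2r leq_mul2l card_ordered_pairs_le orbT.
Qed.

Local Open Scope ring_scope.

Lemma dup_row_density (R : realFieldType) (eps : R) :
  0 < eps -> 2 / eps <= n%:R ->
  eps * n%:R ^+ (s.+1 + t) <= (copies A1 M)%:R ->
  eps ^+ 2 / 4 * n%:R ^+ (s.+2 + t) <= (copies A M)%:R.
Proof.
move=> eps_gt0 n_ge; have := copies_dup_row_sqr.
rewrite -(ler_nat R) natrX natrM natrD natrM natrX !addSn !exprS.
set a := (copies A1 M)%:R; set b := (copies A M)%:R; set x := n%:R; set N := x ^+ (s + t).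
move=> sqr_le dens1.
have eps_x : 2 <= eps * x by rewrite mulrC -ler_pdivrMr.
have x_gt0 : 0 < x by apply: lt_le_trans n_ge; rewrite divr_gt0.
have N_gt0 : 0 < N by rewrite exprn_gt0.
have [a_ge0 b_ge0] : 0 <= a /\ 0 <= b by rewrite !ler0n.
have a_ge : 2 * N <= a by nra.
have sqr_a_le : a ^+ 2 <= 4 * N * b by nra.
have sqr_dens : (eps * (x * N)) ^+ 2 <= a ^+ 2.
  by rewrite !expr2; apply: ler_pM => //; rewrite !mulr_ge0 ?ltW.
have : N * (eps ^+ 2 * x ^+ 2 * N) <= N * (4 * b) by lra.
rewrite ler_pM2l //; lra.
Qed.

End DuplicateRow.

Local Open Scope ring_scope.

Definition forces (R : realFieldType) (T : finType) (s0 s t : nat)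
    (B : 'M[T]_(s0, t)) (A : 'M[T]_(s, t)) : Prop :=
  exists p1 p2 : {poly R},
    forall eps : R, 0 < eps ->
      0 < p2.[eps^-1] /\
      forall n : nat, p1.[eps^-1] <= n%:R ->
        forall M : 'M[T]_n,
          eps * n%:R ^+ (s0 + t) <= (copies B M)%:R ->
          (p2.[eps^-1])^-1 * n%:R ^+ (s + t) <= (copies A M)%:R.

Section Forces.
Variables (R : realFieldType) (T : finType) (t : nat).

Lemma forces_trans s0 s1 s (B : 'M[T]_(s0, t)) (C : 'M[T]_(s1, t)) (A : 'M[T]_(s, t)) :
  forces R B C -> forces R C A -> forces R B A.
Proof.
move=> [p1 [p2 forces_BC]] [q1 [q2 forces_CA]].
exists (p1 * p1 + (q1 \Po p2) * (q1 \Po p2) + 1), (q2 \Po p2) => eps eps_gt0.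
have [p2_gt0 {}forces_BC] := forces_BC eps eps_gt0.
have inv_p2_gt0 : 0 < p2.[eps^-1]^-1 by rewrite invr_gt0.
have [q2_gt0 {}forces_CA] := forces_CA _ inv_p2_gt0.
rewrite invrK in q2_gt0 forces_CA; rewrite !hornerD !hornerM !horner_comp hornerC.
split=> // n n_ge M dens_B.
have le_sqr_add (z w : R) : z <= z * z + w * w + 1 by nra.
have := le_sqr_add p1.[eps^-1] q1.[p2.[eps^-1]].
have := le_sqr_add q1.[p2.[eps^-1]] p1.[eps^-1].
move=> le_q1 le_p1; apply: forces_CA; first lra.
by apply: forces_BC => //; lra.
Qed.

Lemma forces_of_copies_le s (B A : 'M[T]_(s, t)) :
  (forall n (M : 'M[T]_n), (copies B M <= copies A M)%N) -> forces R B A.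
Proof.
move=> le_copies; exists 0, 'X => eps eps_gt0; rewrite hornerX invrK invr_gt0.
split=> // n _ M dens_B; apply: le_trans dens_B _; rewrite ler_nat; exact: le_copies.
Qed.

Lemma forces_rowsub_incr s0 s (B : 'M[T]_(s0, t)) (phi : 'I_s -> 'I_s0) :
  {homo phi : k k' / (k < k')%N} -> (forall y, exists k, phi k = y) ->
  forces R B (rowsub phi B).
Proof.
move=> phi_incr phi_surj.
have phi_inj : injective phi.
  by move=> k k' eq_phi; apply: val_inj; case: (ltngtP k k') => // /phi_incr; rewrite eq_phi ltnn.
have eq_s : s = s0.
  apply/eqP; rewrite eqn_leq; apply/andP; split.
    by have := leq_card phi phi_inj; rewrite !card_ord.
  have : [set: 'I_s0] \subset phi @: [set: 'I_s].
    by apply/subsetP => y _; have [k <-] := phi_surj y; rewrite imset_f ?inE.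
  by move/subset_leq_card/leq_trans/(_ (leq_imset_card _ _)); rewrite !cardsT !card_ord.
subst s0; apply: forces_of_copies_le => n M; exact: leq_copies_rowsub.
Qed.

Lemma forces_dup_row s (A : 'M[T]_(s.+2, t)) (i : 'I_s.+1) :
  (forall j, A (widen_ord (leqnSn _) i) j = A (lift ord0 i) j) ->
  forces R (row' (lift ord0 i) A) A.
Proof.
move=> eq_rows; exists (2%:P * 'X), (4%:P * 'X^2) => eps eps_gt0.
rewrite !hornerCM hornerX hornerXn.
split=> [|n n_ge M dens]; first by rewrite mulr_gt0 ?exprn_gt0 ?invr_gt0.
have -> : (4 * eps^-1 ^+ 2)^-1 = eps ^+ 2 / 4 by field; rewrite gt_eqF.
exact: dup_row_density.
Qed.

Lemma forces_rowsub s0 (B : 'M[T]_(s0, t)) s (phi : 'I_s -> 'I_s0) :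
  {homo phi : k k' / (k <= k')%N} -> (forall y, exists k, phi k = y) ->
  forces R B (rowsub phi B).
Proof.
elim/ltn_ind: s phi => s IH phi phi_mono phi_surj.
case: (pickP (fun p : 'I_s * 'I_s => (p.1 < p.2)%N && (phi p.1 == phi p.2))); last first.
  move=> phi_inj; apply: forces_rowsub_incr => // k k' lt_kk'.
  rewrite ltn_neqAle (phi_mono _ _ (ltnW lt_kk')) andbT; apply/negP => /eqP /val_inj eq_phi.
  by have := phi_inj (k, k'); rewrite /= lt_kk' eq_phi eqxx.
case: s IH phi phi_mono phi_surj => [|[|s]] IH phi phi_mono phi_surj.
- by move=> [k k'] _; have := ltn_ord k; lia.
- by move=> [k k'] /andP [/= lt_kk' _]; have := ltn_ord k'; lia.
move=> [k k'] /andP [/= lt_kk' /eqP eq_phi].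
have lt_k : (k < s.+1)%N by have := ltn_ord k'; lia.
pose i := Ordinal lt_k.
have eq_phi_i : phi (widen_ord (leqnSn _) i) = phi (lift ord0 i).
  apply/val_inj/eqP; rewrite eqn_leq phi_mono /=; last by rewrite leqnSn.
  by rewrite (_ : widen_ord _ i = k) ?eq_phi; [apply: phi_mono | apply: val_inj].
apply: (forces_trans _ (@forces_dup_row _ (rowsub phi B) i _)); last first.
  by move=> j; rewrite !mxE eq_phi_i.
have -> : row' (lift ord0 i) (rowsub phi B) = rowsub (phi \o lift (lift ord0 i)) B.
  by apply/matrixP => a j; rewrite !mxE.
apply: IH => // [a b le_ab | y]; first by apply: phi_mono; rewrite /= leq_bump2.
have [k0 <-] := phi_surj y.
case: (unliftP (lift ord0 i) k0) => [k1 ->|->]; first by exists k1.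
by exists i; rewrite /= lift_lift0_widen eq_phi_i.
Qed.

End Forces.

Lemma count_leq_nth_sorted (r : seq nat) m :
  sorted ltn r -> (m < size r)%N -> count (fun a => a <= nth 0 r m)%N r = m.+1.
Proof.
elim: r m => [|x r IH] m //= r_sorted lt_m.
have x_lt := order_path_min ltn_trans r_sorted.
case: m lt_m => [|m] lt_m /=.
  rewrite leqnn -(count_pred0 r); congr _.+1; apply: eq_in_count => a a_r /=.
  by move/allP: x_lt => /(_ a a_r); rewrite ltnNge => /negbTE.
rewrite IH ?(path_sorted r_sorted) //.
by move/allP: x_lt => /(_ _ (mem_nth 0 lt_m)) /ltnW ->.
Qed.

Section DedupIndex.
Variables (T : finType) (s t : nat) (A : 'M[T]_(s, t)).

Local Notation K := (kept_rows A).
Let cnt (k : 'I_s) := count (fun a : 'I_s => a <= k)%N K.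

Lemma mem_kept_rows k : (k \in K) = keep_row A k.
Proof. by rewrite mem_filter mem_enum andbT. Qed.

Lemma sorted_kept_rows : sorted ltn (map val K).
Proof.
rewrite sorted_map; apply: sorted_filter; first exact: (fun b a c => @ltn_trans b a c).
by rewrite -sorted_map val_enum_ord iota_ltn_sorted.
Qed.

Lemma cnt_nth x0 m : (m < size K)%N -> cnt (nth x0 K m) = m.+1.
Proof.
move=> lt_m; rewrite /cnt -(count_leq_nth_sorted sorted_kept_rows) ?size_map //.
by rewrite count_map (nth_map x0).
Qed.

Lemma cnt_pred_lt k : ((cnt k).-1 < dedup_size A)%N.
Proof.
have kept0 : Ordinal (leq_ltn_trans (leq0n k) (ltn_ord k)) \in K.
  by rewrite mem_kept_rows /keep_row eqxx.
have : (0 < cnt k)%N by rewrite -has_count; apply/hasP; eexists; first exact: kept0.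
have := count_size (fun a : 'I_s => a <= k)%N K.
by rewrite -/(cnt k) /dedup_size; case: (cnt k).
Qed.

Definition dedup_index (k : 'I_s) : 'I_(dedup_size A) := Ordinal (cnt_pred_lt k).

Lemma val_dedup_index k : val (dedup_index k) = (cnt k).-1.
Proof. by []. Qed.

Lemma dedup_index_mono : {homo dedup_index : k k' / (k <= k')%N}.
Proof.
move=> k k' le_kk'; rewrite !val_dedup_index -!subn1 leq_sub2r //.
by apply: sub_count => a /= /leq_trans; apply.
Qed.

Lemma dedup_index_surj y : exists k, dedup_index k = y.
Proof.
exists (tnth (in_tuple K) y); apply: val_inj.
by rewrite val_dedup_index (tnth_nth (tnth (in_tuple K) y)) in_tupleE cnt_nth.
Qed.

Lemma dedup_index_kept k : k \in K -> tnth (in_tuple K) (dedup_index k) = k.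
Proof.
move=> k_kept; rewrite (tnth_nth k) in_tupleE val_dedup_index.
have -> : cnt k = (index k K).+1 by rewrite -{1}(nth_index k k_kept) cnt_nth ?index_mem.
exact: nth_index.
Qed.

Lemma rowsub_dedup_index : rowsub dedup_index (dedup A) = A.
Proof.
apply/matrixP => k j; rewrite !mxE.
move: {2}(val k) (erefl (val k)) => v; elim: v k => [|v IH] k val_k.
  by rewrite dedup_index_kept // mem_kept_rows /keep_row val_k.
have [k_kept|k_dup] := boolP (k \in K); first by rewrite dedup_index_kept.
have lt_v : (v < s)%N by have := ltn_ord k; rewrite val_k => /ltnW.
pose k0 := Ordinal lt_v.
have eq_row : row k0 A = row k A.
  move: k_dup; rewrite mem_kept_rows /keep_row negb_or val_k /= negb_exists.
  by move=> /forallP /(_ k0); rewrite /= eqxx /= negbK => /eqP.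
have -> : dedup_index k = dedup_index k0.
  apply: val_inj; rewrite !val_dedup_index /cnt; congr _.-1.
  apply: eq_in_count => a a_kept /=.
  rewrite val_k leq_eqVlt ltnS orb_idl // => /eqP eq_a.
  by move: k_dup; rewrite (_ : k = a) ?a_kept //; apply: val_inj; rewrite /= val_k eq_a.
by rewrite IH //; have := congr1 (fun r : 'rV[T]_t => r ord0 j) eq_row; rewrite !mxE.
Qed.

End DedupIndex.

Unset Implicit Arguments.

Theorem lemma3p2 (R : realType) (T : finType) (s t : nat) (A : 'M[T]_(s, t)) :
  exists p1 p2 : {poly R},
    forall eps : R, 0 < eps ->
      0 < p2.[eps^-1] /\
      forall n : nat, p1.[eps^-1] <= n%:R ->
        forall M : 'M[T]_n,
          eps * n%:R ^+ (dedup_size A + t) <= (copies (dedup A) M)%:R ->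
          (p2.[eps^-1])^-1 * n%:R ^+ (s + t) <= (copies A M)%:R.
Proof.
have := forces_rowsub R (dedup A) (@dedup_index_mono _ _ _ A)
  (@dedup_index_surj _ _ _ A).
by rewrite rowsub_dedup_index.
Qed.
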